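(* Let $u:\Sigma\to M$ be a smooth $(j,J)$-holomorphic map and $z_0\in\Sigma$ with $j^ku(z_0)=0$. Then $j^{k+1}u(z_0)=0$ if and only if $\sigma^{k+1}(J,(j,u),z_0)=0$.
   Context: $(M,J)$ almost complex of real dimension $2n$, $(\Sigma,j)$ a Riemann surface; $u$ is $(j,J)$-holomorphic if $J\circ du=du\circ j$. $j^ku(z)=0$ means all derivatives of $u$ of orders $1,\dots,k$ vanish at $z$; then $d^{k+1}u(z)$ is a well-defined symmetric $(k+1)$-linear map $T_z\Sigma\to T_{u(z)}M$. The space of symmetric $\ell$-linear maps $T_z\Sigma\to T_xM$ splits relative to $(j_z,J_x)$ into the holomorphic part $H^{(\ell,0)}_{(z,x)}$ (complex multilinear maps), the antiholomorphic part and mixed parts; $\pi^{hol}$ is the projection to $H^{(\ell,0)}$. The principal holomorphic jet is $\sigma^{k+1}(J,(j,u),z_0):=\pi^{hol}(d^{k+1}u(z_0))$. *)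

From Stdlib Require Import Reals ClassicalEpsilon.
From mathcomp Require Import all_boot.
Set Implicit Arguments. Unset Strict Implicit.

Local Open Scope R_scope.

Definition pt (m : nat) := 'I_m -> R.
Definition mat (m : nat) := 'I_m -> 'I_m -> R.

Definition sumI m (f : 'I_m -> R) : R := foldr Rplus 0 (map f (enum 'I_m)).
Definition matvec m (A : mat m) (x : pt m) : pt m :=
  fun a => sumI (fun b => A a b * x b).
Definition matmul m (A B : mat m) : mat m :=
  fun a c => sumI (fun b => A a b * B b c).
Definition zero_pt m : pt m := fun _ => 0.

Definition is_cplx_str m (A : mat m) : Prop :=
  forall a c, matmul A A a c = if a == c then -1 else 0.

Definition upd m (x : pt m) (i : 'I_m) (h : R) : pt m :=
  fun k => if k == i then x k + h else x k.
(* the derivative at 0 of g (when it exists; junk otherwise) *)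
Definition D0 (g : R -> R) : R :=
  epsilon (inhabits 0) (fun l => derivable_pt_lim g 0 l).
Definition partial m (i : 'I_m) (f : pt m -> R) : pt m -> R :=
  fun x => D0 (fun h => f (upd x i h)).
Fixpoint iter_partial m (ds : seq 'I_m) (f : pt m -> R) : pt m -> R :=
  match ds with [::] => f | i :: ds' => partial i (iter_partial ds' f) end.

Definition cont_at m (f : pt m -> R) (x : pt m) : Prop :=
  forall eps, 0 < eps -> exists delta, 0 < delta /\
    forall y, (forall i, Rabs (y i - x i) < delta) -> Rabs (f y - f x) < eps.
Definition is_open m (V : pt m -> Prop) : Prop :=
  forall x, V x -> exists delta, 0 < delta /\
    forall y, (forall i, Rabs (y i - x i) < delta) -> V y.

Definition smooth_on m (V : pt m -> Prop) (f : pt m -> R) : Prop :=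
  forall (ds : seq 'I_m) x, V x ->
    cont_at (iter_partial ds f) x /\
    forall i, exists l, derivable_pt_lim (fun h => iter_partial ds f (upd x i h)) 0 l.
Definition smooth_vec m p (V : pt m -> Prop) (f : pt m -> pt p) : Prop :=
  forall a, smooth_on V (fun x => f x a).
Definition smooth_mat m p (V : pt m -> Prop) (A : pt m -> mat p) : Prop :=
  forall a b, smooth_on V (fun x => A x a b).

Definition vpartial m p (i : 'I_m) (f : pt m -> pt p) : pt m -> pt p :=
  fun x a => partial i (fun y => f y a) x.
Fixpoint iter_vpartial m p (ds : seq 'I_m) (f : pt m -> pt p) : pt m -> pt p :=
  match ds with [::] => f | i :: ds' => vpartial i (iter_vpartial ds' f) end.

Definition du m p (f : pt m -> pt p) (z : pt m) (v : pt m) : pt p :=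
  fun a => sumI (fun c => v c * vpartial c f z a).

(* d^l f(z)(v_1,...,v_l) as a function of the list [:: v_1; ...; v_l] *)
Fixpoint dmult m p (f : pt m -> pt p) (vs : seq (pt m)) (z : pt m) : pt p :=
  match vs with
  | [::] => f z
  | v :: vs' => fun a => sumI (fun c => v c * dmult (vpartial c f) vs' z a)
  end.

Definition jet_vanish m p (f : pt m -> pt p) (z : pt m) (k : nat) : Prop :=
  forall ds : seq 'I_m, (0 < size ds <= k)%N -> iter_vpartial ds f z = @zero_pt p.

(* Projection to the part that is complex linear in slot i, relative to
   (j0, J0):  A |-> (A - J0 o A o (j0 in slot i)) / 2. *)
Definition slot_proj m p (j0 : mat m) (J0 : mat p) (i : nat)
  (A : seq (pt m) -> pt p) : seq (pt m) -> pt p :=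
  fun vs a => / 2 * (A vs a - matvec J0
     (A (set_nth (@zero_pt m) vs i (matvec j0 (nth (@zero_pt m) vs i)))) a).

(* pi^hol on l-linear maps: composite of the (commuting) slot projections;
   its image is exactly H^(l,0), the complex l-linear maps. *)
Fixpoint hol_part m p (j0 : mat m) (J0 : mat p) (l : nat)
  (A : seq (pt m) -> pt p) : seq (pt m) -> pt p :=
  match l with
  | 0 => A
  | l'.+1 => slot_proj j0 J0 l' (hol_part j0 J0 l' A)
  end.

Definition sigma_jet m p (J : pt p -> mat p) (j : pt m -> mat m)
  (u : pt m -> pt p) (z0 : pt m) (l : nat) : seq (pt m) -> pt p :=
  hol_part (j z0) (J (u z0)) l (fun vs => dmult u vs z0).

(** Differentiating the Cauchy-Riemann equation [J(u) du = du j] k times at [z0], the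
    Leibniz rule and [j^k u(z0) = 0] kill every term in which [J o u] or [j] is
    differentiated, so [d^(k+1) u(z0)] is complex linear in its last argument, hence (by
    the symmetry of higher partial derivatives) in every argument.  Thus it lies in
    [H^(k+1,0)], where [pi^hol] is the identity: [sigma^(k+1) = d^(k+1) u(z0)], and this
    vanishes exactly when [j^(k+1) u(z0)] does. *)

From HB Require Import structures.
From Stdlib Require Import Reals Lra ClassicalEpsilon FunctionalExtensionality PropExtensionality.
From mathcomp Require Import all_boot.
Set Implicit Arguments. Unset Strict Implicit.
Local Open Scope R_scope.

HB.instance Definition _ :=
  Monoid.isComLaw.Build R 0 Rplus (fun x y z => esym (Rplus_assoc x y z)) Rplus_comm Rplus_0_l.
HB.instance Definition _ := Monoid.isMulLaw.Build R 0 Rmult Rmult_0_l Rmult_0_r.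
HB.instance Definition _ :=
  Monoid.isAddLaw.Build R Rmult Rplus Rmult_plus_distr_r Rmult_plus_distr_l.

Local Notation "\sum_ i F" := (\big[Rplus/0]_i F) : R_scope.
Local Notation "\sum_ ( i <- r ) F" := (\big[Rplus/0]_(i <- r) F) : R_scope.

Lemma sumIE m (f : 'I_m -> R) : sumI f = \sum_c f c.
Proof. by rewrite /sumI -big_enum /= unlock /reducebig /= foldr_map. Qed.

Definition basis_vec m (c : 'I_m) : pt m := fun b => if b == c then 1 else 0.

Lemma sum_basis_vecl m d (X : 'I_m -> R) : \sum_c basis_vec d c * X c = X d.
Proof.
rewrite (eq_bigr (fun c => if c == d then X c else 0)).
  by rewrite -big_mkcond big_pred1_eq.
by move=> c _; rewrite /basis_vec; case: (c == d); ring.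
Qed.

Lemma sum_basis_vecr m d (X : 'I_m -> R) : \sum_c X c * basis_vec d c = X d.
Proof. by rewrite -(sum_basis_vecl d X); apply: eq_bigr => c _; ring. Qed.

(** * Calculus in one variable *)

Lemma D0_eq g l : derivable_pt_lim g 0 l -> D0 g = l.
Proof.
move=> gl; apply: (uniqueness_limite g 0) (gl).
exact: epsilon_spec (inhabits 0) (fun l => derivable_pt_lim g 0 l) (ex_intro _ l gl).
Qed.

Definition near0 (P : R -> Prop) := exists d, 0 < d /\ forall h, Rabs h < d -> P h.

Lemma derivable_pt_lim_near0 g1 g2 l : near0 (fun h => g1 h = g2 h) ->
  derivable_pt_lim g1 0 l -> derivable_pt_lim g2 0 l.
Proof.
move=> [d [d0 g12]] g1l eps e0.
have [del Hdel] := g1l eps e0.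
have dd0 : 0 < Rmin d del by apply: Rmin_pos => //; exact: cond_pos.
exists (mkposreal _ dd0) => h hn /= hl.
have hd : Rabs h < d by apply: Rlt_le_trans hl (Rmin_l _ _).
have hdel : Rabs h < del by apply: Rlt_le_trans hl (Rmin_r _ _).
rewrite -g12 ?Rplus_0_l // -(g12 0) ?Rabs_R0 //.
by have := Hdel h hn hdel; rewrite Rplus_0_l.
Qed.

Lemma D0_near0 g1 g2 : near0 (fun h => g1 h = g2 h) -> D0 g1 = D0 g2.
Proof.
move=> g12; rewrite /D0; congr epsilon.
apply: functional_extensionality => l; apply: propositional_extensionality.
split; apply: derivable_pt_lim_near0 => //.
by case: g12 => d [d0 Hd]; exists d; split => // h /Hd.
Qed.

Lemma derivable_pt_lim_shift g t l :
  derivable_pt_lim (fun h => g (t + h)) 0 l -> derivable_pt_lim g t l.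
Proof.
move=> gl eps e0; have [d Hd] := gl eps e0; exists d => h hn hl.
by have := Hd h hn hl; rewrite Rplus_0_l Rplus_0_r.
Qed.

Lemma MVT_between F F' a b :
  (forall c, Rmin a b <= c <= Rmax a b -> derivable_pt_lim F c (F' c)) ->
  exists c, Rmin a b <= c <= Rmax a b /\ F b - F a = F' c * (b - a).
Proof.
move=> dF; case: (Rtotal_order a b) => [ab|[<-|ab]].
- have mM : Rmin a b = a /\ Rmax a b = b by rewrite Rmin_left ?Rmax_right; lra.
  have [c [-> hc]] : exists c, F b - F a = F' c * (b - a) /\ a < c < b.
    by apply: MVT_cor2 => // c hc; apply: dF; lra.
  by exists c; split => //; lra.
- by exists a; split; [rewrite Rmin_left ?Rmax_right; lra|ring].
- have mM : Rmin a b = b /\ Rmax a b = a by rewrite Rmin_right ?Rmax_left; lra.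
  have [c [Fba hc]] : exists c, F a - F b = F' c * (a - b) /\ b < c < a.
    by apply: MVT_cor2 => // c hc; apply: dF; lra.
  by exists c; split; lra.
Qed.

Lemma Rabs_between0 b c : Rmin 0 b <= c <= Rmax 0 b -> Rabs c <= Rabs b.
Proof. by rewrite /Rmin /Rmax; case: Rle_dec => _; split_Rabs; lra. Qed.

Lemma Rabs_approx_product P P0 q L eps : 0 < eps ->
  Rabs (P - P0) < Rmin 1 (eps / (2 * (Rabs L + 1))) ->
  Rabs q < eps / (2 * (Rabs P0 + 1)) ->
  Rabs (P * q + (P - P0) * L) < eps.
Proof.
move=> e0 hP hq; have := Rabs_pos L; have := Rabs_pos P0 => P0p Lp.
have hP1 := Rmin_l 1 (eps / (2 * (Rabs L + 1))).
have hP2 := Rmin_r 1 (eps / (2 * (Rabs L + 1))).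
have hPb : Rabs P <= Rabs P0 + 1 by have := Rabs_triang_inv P P0; lra.
apply: Rle_lt_trans (Rabs_triang _ _) _; rewrite !Rabs_mult.
have t1 : Rabs P * Rabs q <= (Rabs P0 + 1) * Rabs q.
  by apply: Rmult_le_compat_r; [exact: Rabs_pos|lra].
have t2 : (Rabs P0 + 1) * Rabs q < eps / 2.
  have -> : eps / 2 = (Rabs P0 + 1) * (eps / (2 * (Rabs P0 + 1))) by field; lra.
  by apply: Rmult_lt_compat_l => //; lra.
have t3 : Rabs (P - P0) * Rabs L <= eps / (2 * (Rabs L + 1)) * Rabs L.
  by apply: Rmult_le_compat_r => //; lra.
have t4 : eps / (2 * (Rabs L + 1)) * Rabs L < eps / 2.
  have -> : eps / 2 = eps / (2 * (Rabs L + 1)) * (Rabs L + 1) by field; lra.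
  by apply: Rmult_lt_compat_l; [apply: Rdiv_lt_0_compat; lra|lra].
lra.
Qed.

Definition tends0 (F : R -> R) := forall eps, 0 < eps -> exists d, 0 < d /\
  forall h, h <> 0 -> Rabs h < d -> Rabs (F h) < eps.

Lemma tends0_ext F G : tends0 F -> (forall h, h <> 0 -> G h = F h) -> tends0 G.
Proof.
move=> F0 GF eps e0; have [d [d0 Hd]] := F0 eps e0.
by exists d; split => // h hn hl; rewrite GF //; exact: Hd.
Qed.

Lemma tends0D F G : tends0 F -> tends0 G -> tends0 (fun h => F h + G h).
Proof.
move=> F0 G0 eps e0.
have e2 : 0 < eps / 2 by lra.
have [d1 [d10 H1]] := F0 _ e2; have [d2 [d20 H2]] := G0 _ e2.
exists (Rmin d1 d2); split; first exact: Rmin_pos.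
move=> h hn hl.
have := H1 h hn (Rlt_le_trans _ _ _ hl (Rmin_l _ _)).
have := H2 h hn (Rlt_le_trans _ _ _ hl (Rmin_r _ _)).
move: (Rabs_triang (F h) (G h)); lra.
Qed.

Lemma derivable_pt_lim_tends0 g l :
  derivable_pt_lim g 0 l <-> tends0 (fun h => (g h - g 0) / h - l).
Proof.
split=> [gl eps e0|g0 eps e0].
- have [d Hd] := gl eps e0; exists d; split; first exact: cond_pos.
  by move=> h hn hl; have := Hd h hn hl; rewrite Rplus_0_l.
- have [d [d0 Hd]] := g0 eps e0; exists (mkposreal _ d0) => h hn hl.
  by rewrite Rplus_0_l; exact: Hd.
Qed.

Lemma derivable_pt_lim_sum T (s : seq T) (F : T -> R -> R) l :
  (forall a, derivable_pt_lim (F a) 0 (l a)) ->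
  derivable_pt_lim (fun h => \sum_(a <- s) F a h) 0 (\sum_(a <- s) l a).
Proof.
move=> dF; elim: s => [|a s IH].
  have -> : (fun h => \sum_(a <- [::]) F a h) = fun _ => 0.
    by apply: functional_extensionality => h; rewrite big_nil.
  by rewrite big_nil; exact: derivable_pt_lim_const.
have -> : (fun h => \sum_(b <- a :: s) F b h) = fun h => F a h + \sum_(b <- s) F b h.
  by apply: functional_extensionality => h; rewrite big_cons.
by rewrite big_cons; exact: derivable_pt_lim_plus.
Qed.

Lemma finite_min m (P : 'I_m -> R -> Prop) :
  (forall b d d', 0 < d' <= d -> P b d -> P b d') ->
  (forall b, exists d, 0 < d /\ P b d) -> exists d, 0 < d /\ forall b, P b d.
Proof.
move=> Pmono Pex.
suff [d [d0 Hd]] : exists d, 0 < d /\ forall b, b \in enum 'I_m -> P b d.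
  by exists d; split => // b; apply: Hd; rewrite mem_enum.
elim: (enum 'I_m) => [|x s [d [d0 Hd]]]; first by exists 1; split => //; lra.
have [e [e0 He]] := Pex x.
have de0 : 0 < Rmin d e by apply: Rmin_pos.
exists (Rmin d e); split => // b; rewrite in_cons => /orP [/eqP ->|bs].
- by apply: (Pmono _ e) => //; split => //; exact: Rmin_r.
- by apply: (Pmono _ d); [split => //; exact: Rmin_l|exact: Hd].
Qed.

(** * Partial derivatives *)

Lemma upd0 m (x : pt m) i : upd x i 0 = x.
Proof.
by apply: functional_extensionality => k; rewrite /upd; case: (k == i); rewrite ?Rplus_0_r.
Qed.

Lemma updD m (x : pt m) i t s : upd (upd x i t) i s = upd x i (t + s).
Proof. apply: functional_extensionality => k; rewrite /upd; case: (k == i) => //; ring. Qed.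

Lemma updC m (x : pt m) i j t s : upd (upd x i t) j s = upd (upd x j s) i t.
Proof.
apply: functional_extensionality => k; rewrite /upd.
by case: (k == i); case: (k == j) => //; ring.
Qed.

Lemma Rabs_upd m (x : pt m) i h k : Rabs (upd x i h k - x k) <= Rabs h.
Proof.
rewrite /upd; case: (k == i); last by rewrite Rminus_diag Rabs_R0; exact: Rabs_pos.
by rewrite Rplus_minus_l; exact: Rle_refl.
Qed.

Lemma open_near0_upd m (D : pt m -> Prop) x i : is_open D -> D x ->
  near0 (fun h => D (upd x i h)).
Proof.
move=> oD Dx; have [d [d0 Hd]] := oD x Dx; exists d; split => // h hh.
by apply: Hd => k; apply: Rle_lt_trans (Rabs_upd x i h k) hh.
Qed.

Section Partials.
Variables (m : nat) (D : pt m -> Prop).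
Hypothesis oD : is_open D.

Lemma partial_eq_on (f g : pt m -> R) i x : D x ->
  (forall y, D y -> f y = g y) -> partial i f x = partial i g x.
Proof.
move=> Dx fg; apply: D0_near0.
have [d [d0 Hd]] := open_near0_upd i oD Dx; exists d; split => // h /Hd; exact: fg.
Qed.

Lemma iter_partial_eq_on (f g : pt m -> R) ds : (forall y, D y -> f y = g y) ->
  forall x, D x -> iter_partial ds f x = iter_partial ds g x.
Proof.
move=> fg; elim: ds => [|i ds IH] x Dx /=; first exact: fg.
exact: partial_eq_on.
Qed.

End Partials.

Lemma iter_partial_cat m (ds es : seq 'I_m) f :
  iter_partial (ds ++ es) f = iter_partial ds (iter_partial es f).
Proof. by elim: ds => //= i ds ->. Qed.

Lemma iter_vpartial_cat m p (ds es : seq 'I_m) (f : pt m -> pt p) :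
  iter_vpartial (ds ++ es) f = iter_vpartial ds (iter_vpartial es f).
Proof. by elim: ds => //= i ds ->. Qed.

Lemma iter_vpartialE m p (ds : seq 'I_m) (f : pt m -> pt p) z a :
  iter_vpartial ds f z a = iter_partial ds (fun y => f y a) z.
Proof.
elim: ds z => //= i ds IH z; rewrite /vpartial /partial.
by congr D0; apply: functional_extensionality => h; rewrite IH.
Qed.

Lemma partial_const m i (c : R) : partial i (fun _ : pt m => c) = fun _ => 0.
Proof.
by apply: functional_extensionality => x; apply: D0_eq; exact: derivable_pt_lim_const.
Qed.

Lemma iter_partial_const m (ds : seq 'I_m) c :
  iter_partial ds (fun _ => c) = fun _ => if ds is [::] then c else 0.
Proof. by elim: ds => //= i ds ->; case: ds => [|? ?]; exact: partial_const. Qed.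

Section SmoothBasics.
Variables (m : nat) (D : pt m -> Prop).

Lemma smooth_derivable f ds x i : smooth_on D f -> D x ->
  derivable_pt_lim (fun h => iter_partial ds f (upd x i h)) 0 (partial i (iter_partial ds f) x).
Proof.
move=> sf Dx; have [_ /(_ i) [l dl]] := sf ds x Dx.
by rewrite /partial (D0_eq dl).
Qed.

Lemma smooth_cont f ds x : smooth_on D f -> D x -> cont_at (iter_partial ds f) x.
Proof. by move=> sf Dx; case: (sf ds x Dx). Qed.

Lemma smooth_derivable_at f i z t : smooth_on D f -> D (upd z i t) ->
  derivable_pt_lim (fun s => f (upd z i s)) t (partial i f (upd z i t)).
Proof.
move=> sf Dz; apply: derivable_pt_lim_shift.
have := smooth_derivable [::] i sf Dz => /=.
congr derivable_pt_lim; apply: functional_extensionality => h; by rewrite updD.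
Qed.

Lemma smooth_iter_partial f ds : smooth_on D f -> smooth_on D (iter_partial ds f).
Proof. by move=> sf es; rewrite -iter_partial_cat; exact: sf. Qed.

Lemma smooth_partial f i : smooth_on D f -> smooth_on D (partial i f).
Proof. exact: (@smooth_iter_partial f [:: i]). Qed.

Lemma smooth_const c : smooth_on D (fun _ => c).
Proof.
move=> ds x _; rewrite iter_partial_const; split=> [eps e0|i].
  by exists 1; split => [|y _]; [lra|rewrite Rminus_diag Rabs_R0].
by exists 0; exact: derivable_pt_lim_const.
Qed.

End SmoothBasics.

(** * The chain rule *)

(* Moving one coordinate at a time from [x] to [y] telescopes [G y - G x]. *)
Definition mix p (x y : pt p) (s : seq 'I_p) : pt p :=
  fun b => if b \in s then y b else x b.

Lemma mix_cons p (x y : pt p) a s : a \notin s ->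
  mix x y (a :: s) = upd (mix x y s) a (y a - x a).
Proof.
move=> as_; apply: functional_extensionality => b; rewrite /mix /upd in_cons.
case: (eqVneq b a) => [->|] /=; last by [].
by rewrite (negbTE as_) Rplus_minus.
Qed.

Section ChainRule.
Variables (p : nat) (V : pt p -> Prop) (G : pt p -> R) (y : R -> pt p) (ly : pt p).
Hypotheses (oV : is_open V) (sG : smooth_on V G) (Vy0 : V (y 0)).
Hypothesis y_cont : forall b eps, 0 < eps ->
  exists d, 0 < d /\ forall h, Rabs h < d -> Rabs (y h b - y 0 b) < eps.
Hypothesis y_der : forall b, derivable_pt_lim (fun h => y h b) 0 (ly b).

Lemma mix_segment_near a s r : a \notin s -> 0 < r -> exists d, 0 < d /\
  forall h, Rabs h < d ->
  forall t, Rmin 0 (y h a - y 0 a) <= t <= Rmax 0 (y h a - y 0 a) ->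
  forall b, Rabs (upd (mix (y 0) (y h) s) a t b - y 0 b) < r.
Proof.
move=> as_ r0.
have [d [d0 Hd]] : exists d, 0 < d /\ forall b h, Rabs h < d -> Rabs (y h b - y 0 b) < r.
  apply: (@finite_min _ (fun b d => forall h, Rabs h < d -> Rabs (y h b - y 0 b) < r)).
  - by move=> b d d' [_ d'd] H h hh; apply: H; lra.
  - by move=> b; exact: y_cont.
exists d; split => // h hh t ht b; rewrite /upd /mix.
case: (eqVneq b a) => [->|_].
  by rewrite (negbTE as_) Rplus_minus_l; apply: Rle_lt_trans (Rabs_between0 ht) (Hd a h hh).
by case: (b \in s); [exact: Hd|rewrite Rminus_diag Rabs_R0].
Qed.

Lemma chain_rule_step a s : a \notin s ->
  tends0 (fun h => (G (mix (y 0) (y h) (a :: s)) - G (mix (y 0) (y h) s)) / h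
                   - partial a G (y 0) * ly a).
Proof.
move=> as_ eps e0; set P0 := partial a G (y 0).
set e1 := Rmin 1 (eps / (2 * (Rabs (ly a) + 1))).
have e10 : 0 < e1.
  by apply: Rmin_pos; [lra|apply: Rdiv_lt_0_compat; have := Rabs_pos (ly a); lra].
have [dc [dc0 Hc]] := @smooth_cont _ _ G [:: a] _ sG Vy0 e1 e10.
have [dV [dV0 HV]] := oV Vy0.
have [du [du0 Hu]] := mix_segment_near as_ (Rmin_pos _ _ dV0 dc0).
have e2 : 0 < eps / (2 * (Rabs P0 + 1)) by apply: Rdiv_lt_0_compat; have := Rabs_pos P0; lra.
have [dd [dd0 Hd]] := proj1 (derivable_pt_lim_tends0 _ _) (y_der a) _ e2.
exists (Rmin du dd); split; first exact: Rmin_pos.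
move=> h hn hl; set z := mix (y 0) (y h) s; set Da := y h a - y 0 a.
have close := Hu h (Rlt_le_trans _ _ _ hl (Rmin_l _ _)).
have inV t : Rmin 0 Da <= t <= Rmax 0 Da -> V (upd z a t).
  by move=> ht; apply: HV => b; apply: Rlt_le_trans (close t ht b) (Rmin_l _ _).
rewrite (mix_cons _ _ as_) -/z -/Da.
have [c [hc]] := @MVT_between (fun t => G (upd z a t))
  (fun t => partial a G (upd z a t)) 0 Da (fun c hc => smooth_derivable_at sG (inV c hc)).
rewrite upd0 Rminus_0_r => ->.
have -> : partial a G (upd z a c) * Da / h - P0 * ly a =
    partial a G (upd z a c) * (Da / h - ly a) + (partial a G (upd z a c) - P0) * ly a.
  by rewrite /Rdiv; ring.
apply: Rabs_approx_product => //.
- by apply: Hc => b; apply: Rlt_le_trans (close c hc b) (Rmin_r _ _).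
- exact: Hd hn (Rlt_le_trans _ _ _ hl (Rmin_r _ _)).
Qed.

Lemma chain_rule :
  derivable_pt_lim (fun h => G (y h)) 0 (sumI (fun a => partial a G (y 0) * ly a)).
Proof.
suff telescope s : uniq s -> tends0 (fun h => (G (mix (y 0) (y h) s) - G (y 0)) / h
    - \sum_(a <- s) partial a G (y 0) * ly a).
  apply/derivable_pt_lim_tends0; apply: (tends0_ext (telescope _ (enum_uniq 'I_p))) => h _.
  rewrite sumIE big_enum /=; congr (((G _ - _) / _) - _).
  by apply: functional_extensionality => b; rewrite /mix mem_enum.
elim: s => [_|a s IH /= /andP [as_ us]].
  move=> eps e0; exists 1; split => [|h hn _]; first lra.
  have -> : mix (y 0) (y h) [::] = y 0 by [].
  by rewrite Rminus_diag /Rdiv Rmult_0_l big_nil Rminus_0_r Rabs_R0.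
apply: (tends0_ext (tends0D (chain_rule_step as_) (IH us))) => h hn.
rewrite big_cons; set S := \big[Rplus/0]_(_ <- s) _.
by set A := G _; set B := G _; set C := G _; field.
Qed.

End ChainRule.

(** * The algebra of smooth functions *)

Section Continuity.
Variables (m : nat) (f g : pt m -> R) (x : pt m).
Hypotheses (cf : cont_at f x) (cg : cont_at g x).

Lemma cont_at_both e1 e2 : 0 < e1 -> 0 < e2 -> exists d, 0 < d /\ forall y,
  (forall i, Rabs (y i - x i) < d) -> Rabs (f y - f x) < e1 /\ Rabs (g y - g x) < e2.
Proof.
move=> e10 e20; have [d1 [d10 H1]] := cf e10; have [d2 [d20 H2]] := cg e20.
exists (Rmin d1 d2); split; first exact: Rmin_pos.
move=> y hy; split; [apply: H1|apply: H2] => i; apply: Rlt_le_trans (hy i) _.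
- exact: Rmin_l.
- exact: Rmin_r.
Qed.

Lemma cont_atD : cont_at (fun z => f z + g z) x.
Proof.
move=> eps e0; have e2 : 0 < eps / 2 by lra.
have [d [d0 Hd]] := cont_at_both e2 e2; exists d; split => // y /Hd [hf hg].
have -> : f y + g y - (f x + g x) = (f y - f x) + (g y - g x) by ring.
by move: (Rabs_triang (f y - f x) (g y - g x)); lra.
Qed.

Lemma cont_atM : cont_at (fun z => f z * g z) x.
Proof.
move=> eps e0.
have e1 : 0 < eps / (2 * (Rabs (g x) + 1)) by apply: Rdiv_lt_0_compat; have := Rabs_pos (g x); lra.
have e2 : 0 < Rmin 1 (eps / (2 * (Rabs (f x) + 1))).
  by apply: Rmin_pos; [lra|apply: Rdiv_lt_0_compat; have := Rabs_pos (f x); lra].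
have [d [d0 Hd]] := cont_at_both e1 e2; exists d; split => // y /Hd [hf hg].
have -> : f y * g y - f x * g x = g y * (f y - f x) + (g y - g x) * f x by ring.
exact: Rabs_approx_product.
Qed.

End Continuity.

Lemma cont_at_comp m p (G : pt p -> R) (u : pt m -> pt p) x :
  cont_at G (u x) -> (forall b, cont_at (fun z => u z b) x) -> cont_at (fun z => G (u z)) x.
Proof.
move=> cG cu eps e0; have [dG [dG0 HG]] := cG eps e0.
have [d [d0 Hd]] := @finite_min _ (fun b d => forall y,
    (forall i, Rabs (y i - x i) < d) -> Rabs (u y b - u x b) < dG)
  (fun b d d' hd H y hy => H y (fun i => Rlt_le_trans _ _ _ (hy i) (proj2 hd)))
  (fun b => cu b dG dG0).
by exists d; split => // y hy; apply: HG => b; exact: Hd.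
Qed.

Lemma cont_at_eq_on m (D : pt m -> Prop) (f g : pt m -> R) x :
  is_open D -> D x -> (forall y, D y -> f y = g y) -> cont_at g x -> cont_at f x.
Proof.
move=> oD Dx fg cg eps e0; have [d1 [d10 H1]] := cg eps e0; have [d2 [d20 H2]] := oD x Dx.
exists (Rmin d1 d2); split; first exact: Rmin_pos.
move=> y hy; rewrite !fg //.
- by apply: H1 => i; apply: Rlt_le_trans (hy i) (Rmin_l _ _).
- by apply: H2 => i; apply: Rlt_le_trans (hy i) (Rmin_r _ _).
Qed.

Definition C1_on m (D : pt m -> Prop) (f : pt m -> R) := forall x, D x ->
  cont_at f x /\ forall i, derivable_pt_lim (fun h => f (upd x i h)) 0 (partial i f x).

Lemma smooth_of_partial_closed m (D : pt m -> Prop) (C : (pt m -> R) -> Prop) :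
  is_open D -> (forall f, C f -> C1_on D f) ->
  (forall f i, C f -> exists g, C g /\ forall x, D x -> partial i f x = g x) ->
  forall f, C f -> smooth_on D f.
Proof.
move=> oD C1 Cpartial.
have Citer ds f : C f -> exists g, C g /\ forall x, D x -> iter_partial ds f x = g x.
  elim: ds => [|i ds IH] Cf; first by exists f.
  have [g [Cg Eg]] := IH Cf; have [g' [Cg' Eg']] := Cpartial g i Cg.
  exists g'; split => // x Dx /=; rewrite -Eg' //; exact: (partial_eq_on oD).
move=> f Cf ds x Dx; have [g [Cg E]] := Citer ds f Cf; have [cg dg] := C1 g Cg x Dx.
split; first exact: (cont_at_eq_on oD Dx E).
move=> i; exists (partial i g x); apply: derivable_pt_lim_near0 (dg i).
have [d [d0 Hd]] := open_near0_upd i oD Dx; exists d; split => // h /Hd Dh.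
by rewrite E.
Qed.

Section C1Algebra.
Variables (m : nat) (D : pt m -> Prop) (f g : pt m -> R).
Hypotheses (f1 : C1_on D f) (g1 : C1_on D g).

Lemma partialD_at i x : D x -> partial i (fun z => f z + g z) x = partial i f x + partial i g x.
Proof.
move=> Dx; apply: D0_eq; apply: derivable_pt_lim_plus; [exact: (f1 Dx).2|exact: (g1 Dx).2].
Qed.

Lemma partialM_at i x : D x ->
  partial i (fun z => f z * g z) x = partial i f x * g x + f x * partial i g x.
Proof.
move=> Dx; apply: D0_eq.
by have := derivable_pt_lim_mult _ _ _ _ _ ((f1 Dx).2 i) ((g1 Dx).2 i); rewrite /= upd0.
Qed.

Lemma C1_onD : C1_on D (fun z => f z + g z).
Proof.
move=> x Dx; have [cf df] := f1 Dx; have [cg dg] := g1 Dx.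
split=> [|i]; first exact: cont_atD.
by rewrite partialD_at //; exact: derivable_pt_lim_plus.
Qed.

Lemma C1_onM : C1_on D (fun z => f z * g z).
Proof.
move=> x Dx; have [cf df] := f1 Dx; have [cg dg] := g1 Dx.
split=> [|i]; first exact: cont_atM.
by rewrite partialM_at //; have := derivable_pt_lim_mult _ _ _ _ _ (df i) (dg i); rewrite /= upd0.
Qed.

End C1Algebra.

Lemma smooth_C1_on m (D : pt m -> Prop) f : smooth_on D f -> C1_on D f.
Proof.
move=> sf x Dx; split; first exact: (@smooth_cont _ _ _ [::] _ sf Dx).
move=> i; exact: (@smooth_derivable _ _ _ [::] _ _ sf Dx).
Qed.

Section Composition.
Variables (m p : nat) (D : pt m -> Prop) (V : pt p -> Prop) (u : pt m -> pt p).
Hypotheses (oV : is_open V) (su : smooth_vec D u) (uV : forall z, D z -> V (u z)).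
Variables (G : pt p -> R).
Hypothesis sG : smooth_on V G.

Lemma derivable_pt_lim_comp x i : D x ->
  derivable_pt_lim (fun h => G (u (upd x i h))) 0
    (sumI (fun a => partial a G (u x) * partial i (fun z => u z a) x)).
Proof.
move=> Dx; have := @chain_rule p V G (fun h => u (upd x i h))
  (fun a => partial i (fun z => u z a) x) oV sG; rewrite upd0; apply; first exact: uV.
- move=> b eps e0; have [d [d0 Hd]] := @smooth_cont _ _ _ [::] _ (su b) Dx eps e0.
  exists d; split => // h hh; apply: Hd => k; exact: Rle_lt_trans (Rabs_upd x i h k) hh.
- move=> b; exact: (@smooth_derivable _ _ _ [::] _ _ (su b) Dx).
Qed.

Lemma partial_comp_at x i : D x -> partial i (fun z => G (u z)) x =
  sumI (fun a => partial a G (u x) * partial i (fun z => u z a) x).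
Proof. by move=> Dx; apply: D0_eq; exact: derivable_pt_lim_comp. Qed.

Lemma C1_on_comp : C1_on D (fun z => G (u z)).
Proof.
move=> x Dx; split=> [|i]; last by rewrite partial_comp_at //; exact: derivable_pt_lim_comp.
apply: cont_at_comp; first exact: (@smooth_cont _ _ _ [::] _ sG (uV Dx)).
move=> b; exact: (@smooth_cont _ _ _ [::] _ (su b) Dx).
Qed.

End Composition.

(* Closed under partial derivatives by the chain rule, which is how smoothness of
   composites is obtained. *)
Inductive smooth_alg m p (D : pt m -> Prop) (V : pt p -> Prop) (u : pt m -> pt p) :
  (pt m -> R) -> Prop :=
| alg_smooth f : smooth_on D f -> smooth_alg D V u f
| alg_comp G : smooth_on V G -> smooth_alg D V u (fun z => G (u z))
| alg_add f g : smooth_alg D V u f -> smooth_alg D V u g -> smooth_alg D V u (fun z => f z + g z)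
| alg_mul f g : smooth_alg D V u f -> smooth_alg D V u g -> smooth_alg D V u (fun z => f z * g z).

Section SmoothAlgebra.
Variables (m p : nat) (D : pt m -> Prop) (V : pt p -> Prop) (u : pt m -> pt p).
Hypotheses (oD : is_open D) (oV : is_open V).
Hypotheses (su : smooth_vec D u) (uV : forall z, D z -> V (u z)).

Lemma alg_sum T (s : seq T) (F : T -> pt m -> R) : (forall a, smooth_alg D V u (F a)) ->
  smooth_alg D V u (fun z => \sum_(a <- s) F a z).
Proof.
move=> sF; elim: s => [|a s IH].
  under [fun z => _]functional_extensionality => z do rewrite big_nil.
  exact/alg_smooth/smooth_const.
by under [fun z => _]functional_extensionality => z do rewrite big_cons; exact: alg_add.
Qed.

Lemma smooth_alg_partial f : smooth_alg D V u f -> C1_on D f /\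
  forall i, exists g, smooth_alg D V u g /\ forall x, D x -> partial i f x = g x.
Proof.
elim=> {f} [f sf|G sG|f g _ [f1 Pf] _ [g1 Pg]|f g Cf [f1 Pf] Cg [g1 Pg]].
- split; first exact: smooth_C1_on.
  by move=> i; exists (partial i f); split => //; apply/alg_smooth/smooth_partial.
- split; first exact: (C1_on_comp oV su uV sG).
  move=> i; exists (fun z => sumI (fun a => partial a G (u z) * partial i (fun z => u z a) z)).
  split; last by move=> x Dx; exact: (partial_comp_at oV su uV sG).
  under [fun z => _]functional_extensionality => z do rewrite sumIE.
  apply: alg_sum => a; apply: alg_mul.
  + by apply/alg_comp/smooth_partial.
  + by apply/alg_smooth/smooth_partial.
- split; first exact: C1_onD.
  move=> i; have [f' [Cf' Ef]] := Pf i; have [g' [Cg' Eg]] := Pg i.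
  exists (fun z => f' z + g' z); split; first exact: alg_add.
  by move=> x Dx; rewrite (partialD_at f1 g1) // Ef // Eg.
- split; first exact: C1_onM.
  move=> i; have [f' [Cf' Ef]] := Pf i; have [g' [Cg' Eg]] := Pg i.
  exists (fun z => f' z * g z + f z * g' z); split; first by apply: alg_add; exact: alg_mul.
  by move=> x Dx; rewrite (partialM_at f1 g1) // Ef // Eg.
Qed.

Lemma smooth_alg_smooth f : smooth_alg D V u f -> smooth_on D f.
Proof.
apply: (smooth_of_partial_closed oD) => [g /smooth_alg_partial []//|g i].
by move=> /smooth_alg_partial [_]; apply.
Qed.

End SmoothAlgebra.

Lemma smooth_comp m p (D : pt m -> Prop) (V : pt p -> Prop) (u : pt m -> pt p) G :
  is_open D -> is_open V -> smooth_vec D u -> (forall z, D z -> V (u z)) ->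
  smooth_on V G -> smooth_on D (fun z => G (u z)).
Proof. by move=> oD oV su uV sG; apply: (smooth_alg_smooth oD oV su uV); exact: alg_comp. Qed.

Section SmoothRing.
Variables (m : nat) (D : pt m -> Prop).
Hypothesis oD : is_open D.

(* With target [R^0] the composition generator only produces constants. *)
Let alg_nocomp f := smooth_alg D (fun _ : pt 0 => True) (fun _ => @zero_pt 0) f.

Let alg_nocomp_smooth f : alg_nocomp f -> smooth_on D f.
Proof.
apply: smooth_alg_smooth => //; last by case.
by move=> x _; exists 1; split => //; lra.
Qed.

Lemma smoothM f g : smooth_on D f -> smooth_on D g -> smooth_on D (fun z => f z * g z).
Proof. by move=> sf sg; apply/alg_nocomp_smooth/alg_mul; exact: alg_smooth. Qed.

Lemma smooth_sum T (s : seq T) F : (forall a, smooth_on D (F a)) ->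
  smooth_on D (fun z => \sum_(a <- s) F a z).
Proof. by move=> sF; apply/alg_nocomp_smooth/alg_sum => a; exact: alg_smooth. Qed.

End SmoothRing.

(** * Linearity and the Leibniz rule *)

Section IteratedPartials.
Variables (m : nat) (D : pt m -> Prop).
Hypothesis oD : is_open D.

Lemma iter_partialD f g ds x : smooth_on D f -> smooth_on D g -> D x ->
  iter_partial ds (fun z => f z + g z) x = iter_partial ds f x + iter_partial ds g x.
Proof.
move=> sf sg; elim: ds x => [|i ds IH] x Dx //=.
rewrite (partial_eq_on oD _ Dx IH); apply: D0_eq.
apply: derivable_pt_lim_plus; first exact: (smooth_derivable _ _ sf).
exact: (smooth_derivable _ _ sg).
Qed.

Lemma iter_partial_sum T (s : seq T) F ds x : (forall a, smooth_on D (F a)) -> D x ->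
  iter_partial ds (fun z => \sum_(a <- s) F a z) x = \sum_(a <- s) iter_partial ds (F a) x.
Proof.
move=> sF Dx; elim: s => [|a s IH].
  rewrite big_nil; under [fun z => _]functional_extensionality => z do rewrite big_nil.
  by rewrite iter_partial_const; case: ds.
under [fun z => _]functional_extensionality => z do rewrite big_cons.
rewrite big_cons iter_partialD ?IH //; exact: smooth_sum.
Qed.


Lemma derivable_pt_lim_iter_partialM P g ds es x i :
  smooth_on D P -> smooth_on D g -> D x ->
  derivable_pt_lim (fun h => iter_partial ds P (upd x i h) * iter_partial es g (upd x i h)) 0
    (partial i (iter_partial ds P) x * iter_partial es g x +
     iter_partial ds P x * partial i (iter_partial es g) x).
Proof.
move=> sP sg Dx.
have := derivable_pt_lim_mult _ _ _ _ _ (smooth_derivable ds i sP Dx) (smooth_derivable es i sg Dx).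
by rewrite /= upd0.
Qed.

Lemma iter_partialM_leibniz P g ds : smooth_on D P -> smooth_on D g ->
  exists L : seq (seq 'I_m * seq 'I_m), (forall e, e \in L -> size e.2 < size ds)%N /\
   forall x, D x -> iter_partial ds (fun z => P z * g z) x =
     P x * iter_partial ds g x + \sum_(e <- L) iter_partial e.1 P x * iter_partial e.2 g x.
Proof.
move=> sP sg; elim: ds => [|i ds [L [HL E]]].
  by exists [::]; split => // x Dx /=; rewrite big_nil Rplus_0_r.
exists (([:: i], ds) :: map (fun e => (i :: e.1, e.2)) L ++ map (fun e => (e.1, i :: e.2)) L).
split.
  move=> e; rewrite in_cons mem_cat => /orP [/eqP -> //|/orP [] /mapP [e' /HL he' ->] //=].
  exact: ltnW.
move=> x Dx /=; rewrite (partial_eq_on oD _ Dx E) big_cons big_cat !big_map /= -big_split /=.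
apply: D0_eq; rewrite -Rplus_assoc [P x * _ + _]Rplus_comm.
apply: derivable_pt_lim_plus.
  exact: (@derivable_pt_lim_iter_partialM P g [::] ds).
apply: derivable_pt_lim_sum => e; exact: derivable_pt_lim_iter_partialM.
Qed.

Lemma iter_partialM_flat P g k z0 ds : smooth_on D P -> smooth_on D g -> D z0 ->
  (forall es, (size es < k)%N -> iter_partial es g z0 = 0) -> (size ds <= k)%N ->
  iter_partial ds (fun z => P z * g z) z0 = P z0 * iter_partial ds g z0.
Proof.
move=> sP sg Dz0 g0 dsk; have [L [HL ->]] := iter_partialM_leibniz ds sP sg => //.
rewrite big_seq big1 ?Rplus_0_r // => e /HL e2.
by rewrite g0 ?Rmult_0_r //; exact: leq_trans e2 dsk.
Qed.

End IteratedPartials.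

(** * Symmetry of higher partial derivatives *)

Definition second_difference m (F : pt m -> R) x i j h :=
  F (upd (upd x i h) j h) - F (upd x i h) - F (upd x j h) + F x.

Lemma second_differenceC m (F : pt m -> R) x i j h :
  second_difference F x j i h = second_difference F x i j h.
Proof. by rewrite /second_difference updC; ring. Qed.

Lemma Rabs_upd2 m (x : pt m) i j s t k :
  Rabs (upd (upd x i s) j t k - x k) <= Rabs s + Rabs t.
Proof.
have := Rabs_upd (upd x i s) j t k; have := Rabs_upd x i s k.
have := Rabs_triang (upd (upd x i s) j t k - upd x i s k) (upd x i s k - x k).
have -> : upd (upd x i s) j t k - upd x i s k + (upd x i s k - x k) =
  upd (upd x i s) j t k - x k by ring.
lra.
Qed.

Section Schwarz.
Variables (m : nat) (D : pt m -> Prop) (F : pt m -> R).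
Hypotheses (oD : is_open D) (sF : smooth_on D F).

Lemma second_difference_mvt x i j h :
  (forall s t, Rabs s <= Rabs h -> Rabs t <= Rabs h -> D (upd (upd x i s) j t)) ->
  exists c c', Rabs c <= Rabs h /\ Rabs c' <= Rabs h /\
    second_difference F x i j h = h * h * partial j (partial i F) (upd (upd x i c) j c').
Proof.
move=> Dnear; have hh := Rle_refl (Rabs h); have h0 := Rabs_pos h.
have D1 s : Rabs s <= Rabs h -> D (upd x i s).
  by move=> hs; rewrite -(upd0 (upd x i s) j); apply: Dnear; rewrite ?Rabs_R0.
have D2 s : Rabs s <= Rabs h -> D (upd (upd x j h) i s).
  by move=> hs; rewrite updC; apply: Dnear.
have [c [/Rabs_between0 hc mvt1]] := @MVT_between
  (fun s => F (upd (upd x j h) i s) - F (upd x i s))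
  (fun s => partial i F (upd (upd x j h) i s) - partial i F (upd x i s)) 0 h
  (fun c hc => derivable_pt_lim_minus _ _ _ _ _
     (smooth_derivable_at sF (D2 _ (Rabs_between0 hc)))
     (smooth_derivable_at sF (D1 _ (Rabs_between0 hc)))).
have [c' [/Rabs_between0 hc' mvt2]] := @MVT_between
  (fun t => partial i F (upd (upd x i c) j t))
  (fun t => partial j (partial i F) (upd (upd x i c) j t)) 0 h
  (fun c' hc' => smooth_derivable_at (smooth_partial i sF) (Dnear _ _ hc (Rabs_between0 hc'))).
exists c, c'; split=> //; split=> //.
rewrite !upd0 in mvt1 mvt2; rewrite /second_difference updC.
have -> : forall a b c d : R, a - b - c + d = (a - b) - (c - d) by move=> *; ring.
by rewrite mvt1 [upd (upd x j h) i c]updC mvt2 !Rminus_0_r; ring.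
Qed.

(* Both mixed partials are [second_difference / h^2] at nearby points. *)
Lemma partialC x i j : D x -> partial i (partial j F) x = partial j (partial i F) x.
Proof.
move=> Dx; apply: cond_eq => eps e0; have e2 : 0 < eps / 2 by lra.
have [d1 [d10 H1]] := smooth_cont [:: i; j] sF Dx e2.
have [d2 [d20 H2]] := smooth_cont [:: j; i] sF Dx e2.
rewrite [iter_partial _ _]/= in H1; rewrite [iter_partial _ _]/= in H2.
have [dD [dD0 HD]] := oD Dx.
have r0 : 0 < Rmin dD (Rmin d1 d2) by apply: Rmin_pos => //; exact: Rmin_pos.
have [rD r12] := (Rmin_l dD (Rmin d1 d2), Rmin_r dD (Rmin d1 d2)).
have [r1 r2] := (Rmin_l d1 d2, Rmin_r d1 d2).
set r := Rmin dD (Rmin d1 d2) in r0 rD r12.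
pose h := r / 4; have h0 : Rabs h = r / 4 by rewrite Rabs_pos_eq /h; lra.
have near a b s t : Rabs s <= Rabs h -> Rabs t <= Rabs h -> forall k,
    Rabs (upd (upd x a s) b t k - x k) < r.
  by move=> hs ht k; have := Rabs_upd2 x a b s t k; lra.
have Dnear a b s t : Rabs s <= Rabs h -> Rabs t <= Rabs h -> D (upd (upd x a s) b t).
  by move=> hs ht; apply: HD => k; have := near a b s t hs ht k; lra.
have [c1 [c1' [hc1 [hc1' E1]]]] := second_difference_mvt (Dnear i j).
have [c2 [c2' [hc2 [hc2' E2]]]] := second_difference_mvt (Dnear j i).
rewrite second_differenceC E1 in E2.
have {E2} E : partial j (partial i F) (upd (upd x i c1) j c1') =
              partial i (partial j F) (upd (upd x j c2) i c2').
  by apply: (Rmult_eq_reg_l (h * h)) => //; rewrite /h; nra.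
have := H1 _ (fun k => Rlt_le_trans _ _ _ (near j i _ _ hc2 hc2' k) (Rle_trans _ _ _ r12 r1)).
have := H2 _ (fun k => Rlt_le_trans _ _ _ (near i j _ _ hc1 hc1' k) (Rle_trans _ _ _ r12 r2)).
by rewrite E; split_Rabs; lra.
Qed.

End Schwarz.

Section Symmetry.
Variables (m : nat) (D : pt m -> Prop) (F : pt m -> R).
Hypotheses (oD : is_open D) (sF : smooth_on D F).

Lemma iter_partial_swap ds i j es x : D x ->
  iter_partial (ds ++ i :: j :: es) F x = iter_partial (ds ++ j :: i :: es) F x.
Proof.
move=> Dx; rewrite !iter_partial_cat /=; apply: (iter_partial_eq_on oD) => // y Dy.
exact: (partialC oD (smooth_iter_partial es sF)).
Qed.

Lemma iter_partial_rot ds i es x : D x ->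
  iter_partial (ds ++ i :: es) F x = iter_partial (ds ++ es ++ [:: i]) F x.
Proof.
move=> Dx; elim: es ds => [|j es IH] ds //.
by rewrite iter_partial_swap // -cat1s catA IH -catA.
Qed.

End Symmetry.

(** * Multilinear maps and the holomorphic projection *)

Lemma matvec_matmul p (A B : mat p) x : matvec A (matvec B x) = matvec (matmul A B) x.
Proof.
apply: functional_extensionality => a; rewrite /matvec /matmul !sumIE.
under eq_bigr => b _ do rewrite sumIE big_distrr /=.
rewrite exchange_big /=; apply: eq_bigr => c _.
by rewrite sumIE big_distrl /=; apply: eq_bigr => b _; ring.
Qed.

Lemma cplx_matvec p (M : mat p) x : is_cplx_str M -> matvec M (matvec M x) = fun a => - x a.
Proof.
move=> M2; rewrite matvec_matmul; apply: functional_extensionality => a.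
rewrite /matvec sumIE -(sum_basis_vecr a (fun c => - x c)); apply: eq_bigr => c _.
by rewrite M2 /basis_vec eq_sym; case: (c == a); ring.
Qed.

(* The multilinear map whose value on basis vectors [e_c1, ..., e_cl] is
   [T [:: c1; ...; cl]]. *)
Fixpoint tensor_eval m p (T : seq 'I_m -> pt p) (vs : seq (pt m)) : pt p :=
  match vs with
  | [::] => T [::]
  | v :: vs' => fun a => sumI (fun c => v c * tensor_eval (fun cs => T (c :: cs)) vs' a)
  end.

Section Tensors.
Variables (m p : nat).
Implicit Types (T : seq 'I_m -> pt p) (vs : seq (pt m)).

Lemma dmult_tensor_eval (f : pt m -> pt p) vs z :
  dmult f vs z = tensor_eval (fun cs => iter_vpartial (rev cs) f z) vs.
Proof.
elim: vs f => [|v vs IH] f //=; apply: functional_extensionality => a.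
congr sumI; apply: functional_extensionality => c; rewrite IH; congr (_ * tensor_eval _ _ _).
by apply: functional_extensionality => cs; rewrite rev_cons -cats1 iter_vpartial_cat.
Qed.

Lemma eq_tensor_eval T T' vs :
  (forall cs, size cs = size vs -> T cs = T' cs) -> tensor_eval T vs = tensor_eval T' vs.
Proof.
elim: vs T T' => [|v vs IH] T T' TT' /=; first exact: TT'.
apply: functional_extensionality => a; congr sumI; apply: functional_extensionality => c.
by rewrite (IH _ (fun cs => T' (c :: cs))) // => cs hs; apply: TT'; rewrite /= hs.
Qed.

Lemma tensor_eval0 vs : tensor_eval (fun _ => @zero_pt p) vs = @zero_pt p.
Proof.
elim: vs => //= v vs ->; apply: functional_extensionality => a.
by rewrite sumIE big1 // => c _; rewrite /zero_pt Rmult_0_r.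
Qed.

Lemma tensor_eval_basis_vec T cs : tensor_eval T (map (@basis_vec m) cs) = T cs.
Proof.
elim: cs T => //= c cs IH T; apply: functional_extensionality => a.
by rewrite sumIE -(sum_basis_vecl c (fun c' => T (c' :: cs) a)); apply: eq_bigr => c' _; rewrite IH.
Qed.

Lemma tensor_eval_coord T vs (a b : 'I_p) :
  tensor_eval T vs a = tensor_eval (fun cs (_ : 'I_p) => T cs a) vs b.
Proof.
by elim: vs T => //= v vs IH T; congr sumI; apply: functional_extensionality => c; rewrite IH.
Qed.

Lemma tensor_eval_sum q (w : 'I_q -> R) (Tc : 'I_q -> seq 'I_m -> pt p) vs a :
  tensor_eval (fun cs a' => sumI (fun c => w c * Tc c cs a')) vs a =
  sumI (fun c => w c * tensor_eval (Tc c) vs a).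
Proof.
elim: vs Tc => [|v vs IH] Tc //=; rewrite !sumIE.
under eq_bigr => d _ do rewrite (IH (fun c cs => Tc c (d :: cs))) sumIE big_distrr /=.
rewrite exchange_big /=; apply: eq_bigr => c _.
by rewrite sumIE big_distrr /=; apply: eq_bigr => d _; ring.
Qed.

Lemma tensor_eval_matvec (M : mat p) T vs :
  tensor_eval (fun cs => matvec M (T cs)) vs = matvec M (tensor_eval T vs).
Proof.
apply: functional_extensionality => a; rewrite (tensor_eval_coord _ _ a a) /matvec.
rewrite (tensor_eval_sum (M a) (fun b cs _ => T cs b)); congr sumI.
by apply: functional_extensionality => b; rewrite -tensor_eval_coord.
Qed.

(* Coefficient form of [T(.., j0 e_b, ..) = J0 T(.., e_b, ..)] in slot [i]; the slot is
   located through [size pre = i]. *)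
Definition cplx_in_slot (j0 : mat m) (J0 : mat p) T i N :=
  forall pre b cs, size pre = i -> (size pre + size cs).+1 = N ->
    (fun a => sumI (fun c => j0 c b * T (pre ++ c :: cs) a)) = matvec J0 (T (pre ++ b :: cs)).

Lemma tensor_eval_cplx_slot (j0 : mat m) (J0 : mat p) i T vs :
  (i < size vs)%N -> cplx_in_slot j0 J0 T i (size vs) ->
  tensor_eval T (set_nth (@zero_pt m) vs i (matvec j0 (nth (@zero_pt m) vs i))) =
  matvec J0 (tensor_eval T vs).
Proof.
rewrite -tensor_eval_matvec.
elim: i T vs => [|i IH] T [|v vs] //= hi Tslot; apply: functional_extensionality => a.
  rewrite /matvec !sumIE.
  under eq_bigr => c _ do rewrite sumIE big_distrl /=.
  rewrite exchange_big /=; apply: eq_bigr => b _.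
  have -> : \sum_c j0 c b * v b * tensor_eval (fun cs => T (c :: cs)) vs a =
      v b * sumI (fun c => j0 c b * tensor_eval (fun cs => T (c :: cs)) vs a).
    by rewrite sumIE big_distrr /=; apply: eq_bigr => c _; ring.
  rewrite -tensor_eval_sum (@eq_tensor_eval _ (fun cs => matvec J0 (T (b :: cs)))) //.
  by move=> cs hs; apply: (Tslot [::]); rewrite //= hs.
congr sumI; apply: functional_extensionality => c.
rewrite IH // => pre b cs hpre hsz; have := Tslot (c :: pre) b cs.
by apply; rewrite /= -?hsz ?addSn ?hpre.
Qed.

End Tensors.

Lemma hol_part_cplx_multilinear m p (j0 : mat m) (J0 : mat p) N (A : seq (pt m) -> pt p) :
  is_cplx_str J0 ->
  (forall i vs, (i < N)%N -> size vs = N ->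
     A (set_nth (@zero_pt m) vs i (matvec j0 (nth (@zero_pt m) vs i))) = matvec J0 (A vs)) ->
  forall l vs, (l <= N)%N -> size vs = N -> hol_part j0 J0 l A vs = A vs.
Proof.
move=> J0c Acplx; elim=> [|l IH] // vs lN hs /=.
have hs' : size (set_nth (@zero_pt m) vs l (matvec j0 (nth (@zero_pt m) vs l))) = N.
  by rewrite size_set_nth hs; apply/maxn_idPr.
rewrite /slot_proj !IH ?(ltnW lN) // Acplx // cplx_matvec //.
by apply: functional_extensionality => a; field.
Qed.

(** * Holomorphic maps *)

Section HolomorphicJets.
Variables (m p : nat) (D : pt m -> Prop) (V : pt p -> Prop).
Variables (j : pt m -> mat m) (J : pt p -> mat p) (u : pt m -> pt p) (z0 : pt m) (k : nat).
Hypotheses (oD : is_open D) (oV : is_open V) (sj : smooth_mat D j) (sJ : smooth_mat V J).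
Hypotheses (su : smooth_vec D u) (uV : forall z, D z -> V (u z)).
Hypothesis hol : forall z v, D z -> matvec (J (u z)) (du u z v) = du u z (matvec (j z) v).
Hypotheses (Dz0 : D z0) (flat : jet_vanish u z0 k).

Lemma hol_equation_coord z a c : D z ->
  \sum_a' J (u z) a a' * partial c (fun y => u y a') z =
  \sum_b j z b c * partial b (fun y => u y a) z.
Proof.
move=> Dz; have du_basis_vec : du u z (basis_vec c) = fun a' => partial c (fun y => u y a') z.
  by apply: functional_extensionality => a'; rewrite /du sumIE sum_basis_vecl.
have j_basis_vec : matvec (j z) (basis_vec c) = fun b => j z b c.
  by apply: functional_extensionality => b; rewrite /matvec sumIE sum_basis_vecr.
have := congr1 (fun w => w a) (hol (basis_vec c) Dz).
by rewrite du_basis_vec j_basis_vec /matvec /du !sumIE.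
Qed.

Lemma iter_partial_flat_product f ds c a : smooth_on D f -> (size ds <= k)%N ->
  iter_partial ds (fun z => f z * partial c (fun y => u y a) z) z0 =
  f z0 * iter_partial (ds ++ [:: c]) (fun y => u y a) z0.
Proof.
move=> sf dsk; rewrite iter_partial_cat (iter_partialM_flat oD _ _ Dz0 _ dsk) //.
  exact: smooth_partial.
move=> es esk; rewrite -[iter_partial es _](iter_partial_cat es [:: c]) -iter_vpartialE flat //.
by rewrite size_cat addn1 esk.
Qed.

Lemma hol_jet_equation ds c a : size ds = k ->
  \sum_a' J (u z0) a a' * iter_partial (ds ++ [:: c]) (fun y => u y a') z0 =
  \sum_b j z0 b c * iter_partial (ds ++ [:: b]) (fun y => u y a) z0.
Proof.
move=> dsk; have sdu b a' : smooth_on D (partial b (fun y => u y a')) by exact/smooth_partial/su.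
have sJu a' : smooth_on D (fun z => J (u z) a a') := smooth_comp oD oV su uV (sJ a a').
have := iter_partial_eq_on oD ds (fun z Dz => hol_equation_coord a c Dz) Dz0.
rewrite !(iter_partial_sum oD) // => [|b|a']; last 2 first.
- exact/smoothM.
- exact/smoothM.
have dsk' : (size ds <= k)%N by rewrite dsk.
rewrite -(eq_bigr _ (fun a' _ => iter_partial_flat_product c a' (sJu a') dsk')).
by rewrite -(eq_bigr _ (fun b _ => iter_partial_flat_product b a (sj b c) dsk')).
Qed.

Lemma jet_cplx_in_slot i :
  cplx_in_slot (j z0) (J (u z0)) (fun cs => iter_vpartial (rev cs) u z0) i k.+1.
Proof.
move=> pre b cs _ [hsz]; apply: functional_extensionality => a.
have rot c a' : iter_vpartial (rev (pre ++ c :: cs)) u z0 a' =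
    iter_partial ((rev cs ++ rev pre) ++ [:: c]) (fun y => u y a') z0.
  rewrite iter_vpartialE rev_cat rev_cons cat_rcons -catA.
  exact: (iter_partial_rot oD (su a')).
have dsk : size (rev cs ++ rev pre) = k by rewrite size_cat !size_rev addnC.
rewrite /matvec !sumIE.
under eq_bigr => c _ do rewrite rot.
under [in RHS]eq_bigr => a' _ do rewrite rot.
by rewrite hol_jet_equation.
Qed.

Lemma dmult_jet_cplx_slot i vs : (i < k.+1)%N -> size vs = k.+1 ->
  dmult u (set_nth (@zero_pt m) vs i (matvec (j z0) (nth (@zero_pt m) vs i))) z0 =
  matvec (J (u z0)) (dmult u vs z0).
Proof.
move=> ik hs; rewrite !dmult_tensor_eval (tensor_eval_cplx_slot (J0 := J (u z0))) ?hs //.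
exact: jet_cplx_in_slot.
Qed.

Lemma sigma_jet_eq_dmult : is_cplx_str (J (u z0)) ->
  forall vs, size vs = k.+1 -> sigma_jet J j u z0 k.+1 vs = dmult u vs z0.
Proof.
move=> J0c vs hs; apply: (hol_part_cplx_multilinear (N := k.+1) J0c) => // i ws ik hws.
exact: dmult_jet_cplx_slot.
Qed.

End HolomorphicJets.

Theorem lemma2p2 (n k : nat) (D : pt 2 -> Prop) (V : pt (2 * n)%N -> Prop)
  (j : pt 2 -> mat 2) (J : pt (2 * n)%N -> mat (2 * n)%N)
  (u : pt 2 -> pt (2 * n)%N) (z0 : pt 2) :
  is_open D -> is_open V ->
  smooth_mat D j -> (forall z, D z -> is_cplx_str (j z)) ->
  smooth_mat V J -> (forall x, V x -> is_cplx_str (J x)) ->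
  smooth_vec D u -> (forall z, D z -> V (u z)) ->
  (forall z v, D z -> matvec (J (u z)) (du u z v) = du u z (matvec (j z) v)) ->
  D z0 -> jet_vanish u z0 k ->
  (jet_vanish u z0 k.+1 <->
   forall vs : seq (pt 2), size vs = k.+1 ->
     sigma_jet J j u z0 k.+1 vs = @zero_pt (2 * n)%N).
Proof.
move=> oD oV sj _ sJ Jc su uV hol Dz0 flat.
have sigmaE := sigma_jet_eq_dmult oD oV sj sJ su uV hol Dz0 flat (Jc _ (uV _ Dz0)).
split=> [flat1 vs hs|sigma0 ds /andP [ds0 dsk1]].
  rewrite sigmaE // dmult_tensor_eval -(tensor_eval0 _ vs); apply: eq_tensor_eval => cs hcs.
  by apply: (flat1 (rev cs)); rewrite size_rev hcs hs /= leqnn.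
case: (leqP (size ds) k) => [dsk|kds]; first by apply: flat; rewrite ds0.
have hds : size ds = k.+1 by apply/eqP; rewrite eqn_leq dsk1.
have := sigma0 (map (@basis_vec 2) (rev ds)).
rewrite size_map size_rev sigmaE ?size_map ?size_rev //.
by rewrite dmult_tensor_eval tensor_eval_basis_vec revK => ->.
Qed.
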